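(* Let $\kappa$ be an infinite cardinal. The set $B=\{(A,\,A\cap C,\,C): A,C\in\mathcal{F}(\kappa),\ A\sim C\}$ is a bounded Boolean sublattice of $S$.
   Context: $\mathcal{F}(\kappa)$ is the Boolean lattice of subsets $X\subseteq\kappa$ that are finite or cofinite. For $A,C\in\mathcal{F}(\kappa)$, $A\sim C$ means that either both $A,C$ are finite or both $\kappa\setminus A,\kappa\setminus C$ are finite. Let $\mu(A,B,C)=(A\cap B)\cup(A\cap C)\cup(B\cap C)$; a triple is balanced if $A\cap B=A\cap C=B\cap C$. $S$ is the set of balanced triples $(A,B,C)\in\mathcal{F}(\kappa)^3$ with $C\setminus\mu(A,B,C)$ finite, ordered componentwise; it is a bounded lattice with componentwise meet, join $(A,B,C)\vee(A',B',C')=(U_1\cup m,U_2\cup m,U_3\cup m)$ where $U_1=A\cup A'$, $U_2=B\cup B'$, $U_3=C\cup C'$, $m=\mu(U_1,U_2,U_3)$, and bounds $(\emptyset,\emptyset,\emptyset)$, $(\kappa,\kappa,\kappa)$. *)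

From mathcomp Require Import all_boot.
From mathcomp Require Import boolp classical_sets cardinality.
Set Implicit Arguments. Unset Strict Implicit. Unset Printing Implicit Defensive.
Local Open Scope classical_set_scope.

(* The infinite cardinal kappa is represented by an arbitrary infinite type T;
   subsets of kappa are [set T]. *)

Definition Ffc {T : Type} (X : set T) : Prop :=
  finite_set X \/ finite_set (~` X).

Definition simF {T : Type} (A C : set T) : Prop :=
  (finite_set A /\ finite_set C) \/ (finite_set (~` A) /\ finite_set (~` C)).

Definition mu {T : Type} (A B C : set T) : set T :=
  (A `&` B) `|` (A `&` C) `|` (B `&` C).

Definition triple (T : Type) := (set T * set T * set T)%type.

Definition balanced {T : Type} (t : triple T) : Prop :=
  let: (A, B, C) := t in A `&` B = A `&` C /\ A `&` C = B `&` C.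

Definition inS {T : Type} (t : triple T) : Prop :=
  let: (A, B, C) := t in
  [/\ Ffc A, Ffc B, Ffc C, balanced t & finite_set (C `\` mu A B C)].

Definition meetS {T : Type} (t t' : triple T) : triple T :=
  let: (A, B, C) := t in let: (A', B', C') := t' in
  (A `&` A', B `&` B', C `&` C').

Definition joinS {T : Type} (t t' : triple T) : triple T :=
  let: (A, B, C) := t in let: (A', B', C') := t' in
  let U1 := A `|` A' in let U2 := B `|` B' in let U3 := C `|` C' in
  let m := mu U1 U2 U3 in
  (U1 `|` m, U2 `|` m, U3 `|` m).

Definition botS {T : Type} : triple T := (set0, set0, set0).
Definition topS {T : Type} : triple T := (setT, setT, setT).

Definition inB {T : Type} (t : triple T) : Prop :=
  exists A C : set T, [/\ Ffc A, Ffc C, simF A C & t = (A, A `&` C, C)].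

Definition bounded_boolean_sublattice {T : Type} (X : triple T -> Prop) : Prop :=
  [/\ (forall t, X t -> inS t),
      X botS /\ X topS,
      (forall t t', X t -> X t' -> X (meetS t t') /\ X (joinS t t')),
      (forall x y z, X x -> X y -> X z ->
         meetS x (joinS y z) = joinS (meetS x y) (meetS x z))
    & (forall x, X x -> exists y, [/\ X y, meetS x y = botS & joinS x y = topS])].

From mathcomp Require Import all_boot.
From mathcomp Require Import boolp classical_sets cardinality.
Set Implicit Arguments. Unset Strict Implicit.
Local Open Scope classical_set_scope.

(* Writing the elements of B as (A, A ∩ C, C), the operations of S act on
   them componentwise: the meet obviously, and the join because the median
   of (A ∪ A', (A ∩ C) ∪ (A' ∩ C'), C ∪ C') is (A ∪ A') ∩ (C ∪ C'), which
   absorbs the middle component and is contained in the outer ones.  So B is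
   the image of the Boolean algebra of pairs (A, C) of finite-or-cofinite
   sets with A ~ C, which is closed under ∩, ∪ and complement.  Such a triple
   lies in S because C \ μ = C \ A is finite when A ~ C. *)

Ltac set_tauto :=
  apply/seteqP; split=> x /=; rewrite /mu /setU /setI /setC /setD /mkset /=; tauto.

Section FinCofin.
Variable T : Type.
Implicit Types A C : set T.

Lemma Ffc0 : Ffc (@set0 T).
Proof. by left; exact: finite_set0. Qed.

Lemma FfcC A : Ffc A -> Ffc (~` A).
Proof. by rewrite /Ffc setCK; case; [right|left]. Qed.

Lemma FfcT : Ffc (@setT T).
Proof. by rewrite -setC0; exact: FfcC Ffc0. Qed.

Lemma FfcI A C : Ffc A -> Ffc C -> Ffc (A `&` C).
Proof.
case=> fA; first by left; apply: finite_setI; left.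
case=> fC; first by left; apply: finite_setI; right.
by right; rewrite setCI finite_setU.
Qed.

Lemma FfcU A C : Ffc A -> Ffc C -> Ffc (A `|` C).
Proof. by move=> /FfcC fA /FfcC fC; rewrite -[_ `|` _]setCK setCU; exact/FfcC/FfcI. Qed.

Lemma simF00 : simF (@set0 T) set0.
Proof. by left; split; exact: finite_set0. Qed.

Lemma simFC A C : simF A C -> simF (~` A) (~` C).
Proof. by rewrite /simF !setCK; case; [right|left]. Qed.

Lemma simFTT : simF (@setT T) setT.
Proof. by rewrite -setC0; exact: simFC simF00. Qed.

Lemma simFI A C A' C' : simF A C -> simF A' C' -> simF (A `&` A') (C `&` C').
Proof.
case=> [[fA fC] _|[fA fC]]; first by left; split; apply: finite_setI; left.
case=> [[fA' fC']|[fA' fC']]; first by left; split; apply: finite_setI; right.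
by right; rewrite !setCI !finite_setU.
Qed.

Lemma simFU A C A' C' : simF A C -> simF A' C' -> simF (A `|` A') (C `|` C').
Proof.
move=> /simFC s /simFC s'.
by rewrite -[A `|` _]setCK -[C `|` _]setCK !setCU; exact/simFC/simFI.
Qed.

Lemma simF_finite_setD A C : simF A C -> finite_set (C `\` A).
Proof.
case=> [[_ fC]|[fA _]]; first exact: finite_setD.
by apply: sub_finite_set fA => x [].
Qed.

End FinCofin.

Section TripleB.
Variable T : Type.
Implicit Types A C : set T.

Definition tripleB A C : triple T := (A, A `&` C, C).

Lemma inS_tripleB A C : Ffc A -> Ffc C -> simF A C -> inS (tripleB A C).
Proof.
move=> fA fC sAC; split=> //; first exact: FfcI.
  by split; set_tauto.
have -> : C `\` mu A (A `&` C) C = C `\` A by set_tauto.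
exact: simF_finite_setD.
Qed.

Lemma inB_tripleB A C : Ffc A -> Ffc C -> simF A C -> inB (tripleB A C).
Proof. by move=> fA fC sAC; exists A, C. Qed.

Lemma meetS_tripleB A C A' C' :
  meetS (tripleB A C) (tripleB A' C') = tripleB (A `&` A') (C `&` C').
Proof. by rewrite /meetS /tripleB; congr (_, _, _); set_tauto. Qed.

Lemma joinS_tripleB A C A' C' :
  joinS (tripleB A C) (tripleB A' C') = tripleB (A `|` A') (C `|` C').
Proof. by rewrite /joinS /tripleB; congr (_, _, _); set_tauto. Qed.

Lemma botS_tripleB : botS = tripleB set0 set0.
Proof. by rewrite /tripleB setI0. Qed.

Lemma topS_tripleB : topS = tripleB setT setT.
Proof. by rewrite /tripleB setIT. Qed.

End TripleB.

Theorem lemma5p3 (T : Type) (Tinf : infinite_set [set: T]) :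
  bounded_boolean_sublattice (@inB T).
Proof.
split.
- by move=> _ [A [C [fA fC sAC ->]]]; exact: inS_tripleB.
- by rewrite botS_tripleB topS_tripleB;
    split; apply: inB_tripleB; auto using Ffc0, FfcT, simF00, simFTT.
- move=> _ _ [A [C [fA fC sAC ->]]] [A' [C' [fA' fC' sAC' ->]]].
  rewrite meetS_tripleB joinS_tripleB.
  split; apply: inB_tripleB; auto using FfcI, FfcU, simFI, simFU.
- move=> _ _ _ [A [C [_ _ _ ->]]] [A' [C' [_ _ _ ->]]] [A'' [C'' [_ _ _ ->]]].
  by rewrite joinS_tripleB !meetS_tripleB joinS_tripleB !setIUr.
- move=> _ [A [C [fA fC sAC ->]]].
  exists (tripleB (~` A) (~` C)); split.
  + by apply: inB_tripleB; auto using FfcC, simFC.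
  + by rewrite meetS_tripleB !setICr botS_tripleB.
  + by rewrite joinS_tripleB !setUCr topS_tripleB.
Qed.
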